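(* For every $n\ge1$: if $\Psi_n\in\mathrm{LTL}[\mathsf{X},\mathsf{wX},\mathsf{F},\mathsf{G}]$ satisfies $\Psi_n\equiv\Phi_n$ (i.e. $\mathcal L(\Psi_n)=\mathcal L(\Phi_n)$), then $\mathrm{size}(\Psi_n)\ge 2^n$.
   Context: Fix $n\ge1$ and atomic propositions $AP=\{\tilde p,\tilde q\}\cup\{p_1,\dots,p_n\}\cup\{q_1,\dots,q_n\}$ (all distinct), $\Sigma=2^{AP}$. Formulae in negation normal form are built from literals $p,\neg p$ ($p\in AP$) with $\land,\lor$ and temporal operators, interpreted on finite non-empty traces $\sigma\in\Sigma^+$ at positions $0\le i<|\sigma|$: $\mathsf{X}\phi$: $i+1<|\sigma|$ and $\phi$ at $i+1$; $\mathsf{wX}\phi$: $i+1=|\sigma|$ or $\phi$ at $i+1$; $\mathsf{F}\phi$/$\mathsf{G}\phi$: $\phi$ at some/every $j$ with $i\le j<|\sigma|$; $\mathsf O\phi$: $\phi$ at some $0\le j\le i$. $\mathcal L(\phi)=\{\sigma\in\Sigma^+:\sigma,0\models\phi\}$. $\mathrm{LTL}[\mathsf{X},\mathsf{wX},\mathsf{F},\mathsf{G}]$ is the set of such formulae using only temporal operators $\mathsf{X},\mathsf{wX},\mathsf{F},\mathsf{G}$. Size: literals 1, unary operators add 1, binary connectives sum sizes plus 1. $\Phi_n := \mathsf{F}\big(\tilde q\land\bigwedge_{i=1}^n\big((q_i\land\mathsf{O}(\tilde p\land p_i))\lor(\neg q_i\land\mathsf{O}(\tilde p\land\neg p_i))\big)\big)$.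 *)

From mathcomp Require Import all_boot.
Set Implicit Arguments. Unset Strict Implicit. Unset Printing Implicit Defensive.

(* Atomic propositions for parameter n: ~p, ~q, p_1..p_n, q_1..q_n
   (indices shifted to 0..n-1 via 'I_n). All distinct by construction. *)
Inductive AP (n : nat) : Type :=
| Ptil | Qtil | Pi of 'I_n | Qi of 'I_n.
Arguments Ptil {n}. Arguments Qtil {n}.

(* A letter of Sigma = 2^AP, given by its characteristic function. *)
Definition letter (A : Type) := A -> bool.

(* LTL formulae in negation normal form over atoms A. *)
Inductive form (A : Type) : Type :=
| Lit of bool & A          (* Lit true a = a, Lit false a = ~a *)
| And of form A & form A
| Or of form A & form A
| Xn of form A
| WX of form A
| Fn of form A
| Gn of form A
| On of form A.

(* Semantics on finite traces s at position i (only used for i < size s). *)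
Fixpoint sat (A : Type) (s : seq (letter A)) (i : nat) (phi : form A) : Prop :=
  match phi with
  | Lit b a => nth (fun _ => false) s i a = b
  | And f g => sat s i f /\ sat s i g
  | Or f g => sat s i f \/ sat s i g
  | Xn f => i.+1 < size s /\ sat s i.+1 f
  | WX f => i.+1 = size s \/ sat s i.+1 f
  | Fn f => exists j, i <= j < size s /\ sat s j f
  | Gn f => forall j, i <= j < size s -> sat s j f
  | On f => exists j, j <= i /\ sat s j f
  end.

Definition lang (A : Type) (phi : form A) (s : seq (letter A)) : Prop :=
  s <> [::] /\ sat s 0 phi.

Fixpoint in_XwXFG (A : Type) (phi : form A) : bool :=
  match phi with
  | Lit _ _ => true
  | And f g | Or f g => in_XwXFG f && in_XwXFG g
  | Xn f | WX f | Fn f | Gn f => in_XwXFG f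
  | On _ => false
  end.

Fixpoint fsize (A : Type) (phi : form A) : nat :=
  match phi with
  | Lit _ _ => 1
  | And f g | Or f g => (fsize f + fsize g).+1
  | Xn f | WX f | Fn f | Gn f | On f => (fsize f).+1
  end.

(* Finite conjunction of a non-empty list (the value on [::] is irrelevant:
   it is only used with n >= 1). *)
Fixpoint bigAnd (A : Type) (d : form A) (l : seq (form A)) : form A :=
  match l with
  | [::] => d
  | [:: x] => x
  | x :: xs => And x (bigAnd d xs)
  end.

Definition conj_i (n : nat) (i : 'I_n) : form (AP n) :=
  Or (And (Lit true (Qi i)) (On (And (Lit true Ptil) (Lit true (Pi i)))))
     (And (Lit false (Qi i)) (On (And (Lit true Ptil) (Lit false (Pi i))))).

Definition Phi (n : nat) : form (AP n) :=
  Fn (And (Lit true Qtil) (bigAnd (Lit true Qtil) [seq conj_i i | i <- enum 'I_n])).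

From mathcomp Require Import all_boot boolp.

Set Implicit Arguments. Unset Strict Implicit. Unset Printing Implicit Defensive.

(* A formula of LTL[X, wX, F, G] read at the first position of a trace [a :: w]
   depends only on [a] and on the truth values, at the first position of [w], of
   its next atoms: the arguments of its X and wX subformulas together with its F
   and G subformulas, at most as many as its size.  For a set [T] of valuations
   of p_1..p_n, let [word T] list the valuations of [T] as ~q-letters; then the
   ~p-letter of [u] followed by [word T] satisfies Phi_n iff [u] is in [T].  So
   the 2^(2^n) sets [T] give pairwise distinct truth-value profiles of the next
   atoms of Psi_n on [word T], whence 2^(2^n) <= 2^(fsize Psi_n). *)

Section FutureFormulas.
Variable A : Type.
Implicit Types (f : form A) (a : letter A) (s w : seq (letter A)).

Fixpoint next_atoms f : seq (form A) :=
  match f with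
  | Lit _ _ | On _ => [::]
  | And f g | Or f g => next_atoms f ++ next_atoms g
  | Xn f | WX f => [:: f]
  | Fn g => f :: next_atoms g
  | Gn g => f :: next_atoms g
  end.

Lemma size_next_atoms f : size (next_atoms f) <= fsize f.
Proof.
elim: f => //= [f IHf g IHg|f IHf g IHg]; rewrite size_cat ltnW // ltnS;
  exact: leq_add.
Qed.

Lemma sat_cons_shift f a w i : in_XwXFG f -> sat (a :: w) i.+1 f <-> sat w i f.
Proof.
elim: f i => //= [f IHf g IHg|f IHf g IHg|f IHf|f IHf|f IHf|f IHf] i.
- by case/andP=> ff fg; rewrite IHf // IHg.
- by case/andP=> ff fg; rewrite IHf // IHg.
- by move=> ff; rewrite IHf // ltnS.
- by move=> ff; rewrite IHf //; split=> -[|]; auto.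
- move=> ff; split=> [[[|j] [ij fj]]|[j [ij fj]]] //.
    by exists j; rewrite -(IHf j ff).
  by exists j.+1; rewrite IHf.
- move=> ff; split=> [fa j ij|fw [|j] //= ij].
    by rewrite -(IHf j ff); apply: fa.
  by rewrite IHf //; apply: fw.
Qed.

Lemma sat_Xn s i f : i.+1 < size s -> sat s i (Xn f) <-> sat s i.+1 f.
Proof. by move=> /= ->; split=> [[]|]. Qed.

Lemma sat_WX s i f : i.+1 < size s -> sat s i (WX f) <-> sat s i.+1 f.
Proof. by move=> /= lt; split=> [[eq_i|//]|]; [rewrite eq_i ltnn in lt | right]. Qed.

Lemma sat_Fn s i f : i < size s -> sat s i (Fn f) <-> sat s i f \/ sat s i.+1 (Fn f).
Proof.
move=> /= lt; split=> [[j [/andP[ij js] fj]]|[fi|[j [/andP[ij js] fj]]]].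
- move: ij fj; rewrite leq_eqVlt => /orP[/eqP <- fi|lt_ij fj]; first by left.
  by right; exists j; rewrite lt_ij.
- by exists i; rewrite leqnn.
- by exists j; rewrite js ltnW.
Qed.

Lemma sat_Gn s i f : i < size s -> sat s i (Gn f) <-> sat s i f /\ sat s i.+1 (Gn f).
Proof.
move=> /= lt; split=> [fa|[fi fa] j /andP[ij js]].
- by split=> [|j /andP[ij js]]; apply: fa; rewrite ?leqnn ?(ltnW ij).
- move: ij; rewrite leq_eqVlt => /orP[/eqP <- //|lt_ij].
  by apply: fa; rewrite lt_ij.
Qed.

Lemma sat_bigAnd (I : eqType) (F : I -> form A) d (r : seq I) s j : r != [::] ->
  sat s j (bigAnd d [seq F i | i <- r]) <-> {in r, forall i, sat s j (F i)}.
Proof.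
elim: r => // x [_ _ | y r IH _] /=.
  by split=> [fx i /[1!inE] /eqP -> // | ]; apply; rewrite inE.
rewrite IH //; split=> [[fx fr] i /[1!inE] /orP[/eqP -> // | /fr //] | fr].
by split=> [|i ir]; apply: fr; rewrite inE ?eqxx ?ir ?orbT.
Qed.

Definition next_profile w f : seq bool := [seq `[< sat w 0 c >] | c <- next_atoms f].

Lemma sat_cons_next_profile f a w w' : in_XwXFG f -> 0 < size w -> 0 < size w' ->
  next_profile w f = next_profile w' f -> sat (a :: w) 0 f <-> sat (a :: w') 0 f.
Proof.
move=> + w0 w'0; elim: f => [b x|f IHf g IHg|f IHf g IHg|f IHf|f IHf|f IHf|f IHf|//].
- by [].
- case/andP=> ff fg /eqP; rewrite /next_profile /= !map_cat eqseq_cat ?size_map //.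
  by case/andP=> /eqP/(IHf ff) {}IHf /eqP/(IHg fg) {}IHg /=; rewrite IHf IHg.
- case/andP=> ff fg /eqP; rewrite /next_profile /= !map_cat eqseq_cat ?size_map //.
  by case/andP=> /eqP/(IHf ff) {}IHf /eqP/(IHg fg) {}IHg /=; rewrite IHf IHg.
- move=> ff [E].
  by rewrite !sat_Xn ?ltnS // !(sat_cons_shift (f := f)) // (asbool_eq_equiv E).
- move=> ff [E].
  by rewrite !sat_WX ?ltnS // !(sat_cons_shift (f := f)) // (asbool_eq_equiv E).
- move=> ff [E /(IHf ff) {}IHf].
  have {}E : sat w 0 (Fn f) <-> sat w' 0 (Fn f) := asbool_eq_equiv E.
  rewrite (sat_Fn (s := a :: w)) // (sat_Fn (s := a :: w')) //.
  by rewrite !(sat_cons_shift (f := Fn f)) // IHf E.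
- move=> ff [E /(IHf ff) {}IHf].
  have {}E : sat w 0 (Gn f) <-> sat w' 0 (Gn f) := asbool_eq_equiv E.
  rewrite (sat_Gn (s := a :: w)) // (sat_Gn (s := a :: w')) //.
  by rewrite !(sat_cons_shift (f := Gn f)) // IHf E.
Qed.

End FutureFormulas.

Section Witnesses.
Variable n : nat.
Local Notation valuation := {ffun 'I_n -> bool}.
Implicit Types (u v : valuation) (T : {set valuation}).

Definition blank : letter (AP n) := fun _ => false.

Definition p_letter u : letter (AP n) :=
  fun x => match x with Ptil => true | Pi i => u i | _ => false end.

Definition q_letter v : letter (AP n) :=
  fun x => match x with Qtil => true | Qi i => v i | _ => false end.

(* The trailing [blank] keeps [word set0] non-empty. *)
Definition word T : seq (letter (AP n)) := rcons [seq q_letter v | v <- enum T] blank.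

Lemma size_word T : 0 < size (word T).
Proof. by rewrite size_rcons. Qed.

Lemma word_Ptil T k : nth blank (word T) k Ptil = false.
Proof. by rewrite nth_rcons_default; elim: (enum T) k => [|v s IH] [|k] /=. Qed.

Lemma word_Qtil T k : nth blank (word T) k Qtil ->
  exists2 v, v \in T & nth blank (word T) k = q_letter v.
Proof.
rewrite nth_rcons_default; have [lt_k _ | ge_k] := ltnP k (size (enum T)); last first.
  by rewrite nth_default ?size_map.
pose v0 : valuation := [ffun=> false].
by exists (nth v0 (enum T) k); rewrite ?(nth_map v0) // -mem_enum mem_nth.
Qed.

Lemma nth_word_index u T : u \in T -> nth blank (word T) (index u (enum T)) = q_letter u.
Proof.
by move=> uT; rewrite nth_rcons_default (nth_map u) ?nth_index ?index_mem ?mem_enum.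
Qed.

Lemma sat_conj_i u T j i :
  sat (p_letter u :: word T) j (conj_i i) <->
  nth blank (p_letter u :: word T) j (Qi i) = u i.
Proof.
have once b : (exists k, k <= j /\ nth blank (p_letter u :: word T) k Ptil = true /\
                        nth blank (p_letter u :: word T) k (Pi i) = b) <-> u i = b.
  split=> [[[|k] [_ [Pk Pik]]] // | <-]; first by rewrite /= word_Ptil in Pk.
  by exists 0.
rewrite /= !once.
by case: (u i); case: (nth _ _ _ _); intuition.
Qed.

Lemma Phi_word u T : 0 < n -> lang (Phi n) (p_letter u :: word T) <-> u \in T.
Proof.
move=> n_gt0; have ord_gt0 : enum 'I_n != [::] by rewrite -size_eq0 size_enum_ord -lt0n.
rewrite /lang /Phi; split=> [[_ [[|k] [_ [/= Qk all_i]]]] // | uT].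
  case/word_Qtil: Qk => v vT letter_k.
  suff -> : u = v by [].
  apply/ffunP => i; move/sat_bigAnd: all_i => /(_ ord_gt0 i (mem_enum _ i)).
  by rewrite sat_conj_i /= letter_k.
split=> //; exists (index u (enum T)).+1; split.
  by rewrite /= size_rcons size_map !ltnS ltnW // index_mem mem_enum.
rewrite /= nth_word_index //; split=> //.
by apply/sat_bigAnd => // i _; rewrite sat_conj_i /= nth_word_index.
Qed.

End Witnesses.

Theorem lemma5 (n : nat) (hn : 1 <= n) (Psi : form (AP n)) :
  in_XwXFG Psi ->
  (forall s : seq (letter (AP n)), lang Psi s <-> lang (Phi n) s) ->
  2 ^ n <= fsize Psi.
Proof.
move=> Psi_future Psi_Phi.
pose profile (T : {set {ffun 'I_n -> bool}}) :=
  map_tuple (fun c => `[< sat (word T) 0 c >]) (in_tuple (next_atoms Psi)).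
have mem_word (T : {set {ffun 'I_n -> bool}}) u :
    u \in T <-> sat (p_letter u :: word T) 0 Psi.
  by rewrite -Phi_word // -Psi_Phi; split=> [[]|].
have profile_inj : injective profile.
  move=> T1 T2 /(congr1 val) same_profile; apply/setP => u.
  have := sat_cons_next_profile (p_letter u) Psi_future (size_word T1) (size_word T2)
    same_profile.
  by rewrite -!mem_word => T12; apply/idP/idP => /T12.
have := leq_card profile profile_inj.
rewrite card_tuple card_bool -cardsT -powersetT card_powerset cardsT.
rewrite card_ffun card_bool card_ord.
by rewrite leq_exp2l // => /leq_trans; apply; apply: size_next_atoms.
Qed.
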